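(* Let $\mathcal{D}$ be a distribution over subsets of $V$ with $\mathbb{E}_{S\sim\mathcal{D}}[|S|]>0$. If $$\frac{\mathbb{E}_{S\sim\mathcal{D}}[\mathrm{Cut}(S,V\setminus S)]}{\mathbb{E}_{S\sim\mathcal{D}}[|V\setminus S|]}\ \ge\ \frac{\mathbb{E}_{S\sim\mathcal{D}}[\mathrm{Induced}(S)]}{\mathbb{E}_{S\sim\mathcal{D}}[|S|]},$$ where the left-hand side is interpreted as $+\infty$ when $\mathcal{D}$ is the point mass at $V$, then for $\alpha=\mathbb{E}_{S\sim\mathcal{D}}[|S|]/\mathbb{E}_{S\sim\mathcal{D}}[\mathrm{Induced}(S)]$ the identity-independent signaling scheme with signal space $\{0,\alpha\}$ that draws $S\sim\mathcal{D}$ and sets $s_v=\alpha\cdot\mathbf 1\{v\in S\}$ is persuasive, and its cost equals $\frac{(\mathbb{E}_{S\sim\mathcal{D}}[|S|])^2}{\mathbb{E}_{S\sim\mathcal{D}}[\mathrm{Induced}(S)]}\le\mathbb{E}_{S\sim\mathcal{D}}[|S|]$.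
   Context: Setting. $V$ is a finite set of $n$ task types and $W=(W_{u,v})_{u,v\in V}$ is a symmetric matrix with entries in $[0,1]$ and $W_{v,v}=1$. For $S\subseteq V$: $\mathrm{Cut}(S,V\setminus S)=\sum_{u\in S}\sum_{v\in V\setminus S}W_{u,v}$ and $\mathrm{Induced}(S)=\sum_{u\in S}\sum_{v\in S}W_{u,v}$ (diagonal terms included). There are $n$ agents; the type profile $t=(t_1,\dots,t_n)$ is a uniformly random bijection $[n]\to V$. An identity-independent signaling scheme with finite signal space $\Sigma\subset[0,1]$ is a distribution on $\Sigma^V$: $s\sim$ it is drawn independently of $t$ and agent $i$ privately receives $s_{t_i}$. For agent $i$, a signal $\theta\in\Sigma$ with $\Pr[s_{t_i}=\theta]>0$ and $x\ge0$, let $Q_i(x\mid\theta)=\mathbb{E}\big[x+\sum_{v'\neq t_i}W_{t_i,v'}s_{v'}\,\big|\,s_{t_i}=\theta\big]$. The scheme is persuasive if for every agent $i$ and every such $\theta$: $Q_i(\theta\mid\theta)\ge1$ and $\theta=\min\{x\ge0:Q_i(x\mid\theta)\ge1\}$. Its cost is $\mathbb{E}[\|s\|_1]$. *)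

From mathcomp Require Import all_boot all_order all_algebra.
Set Implicit Arguments. Unset Strict Implicit. Unset Printing Implicit Defensive.
Import Order.TTheory GRing.Theory Num.Theory.
Local Open Scope ring_scope.

Definition Cut (R : realFieldType) (V : finType) (W : V -> V -> R) (S : {set V}) : R :=
  \sum_(u in S) \sum_(v in ~: S) W u v.
Definition Induced (R : realFieldType) (V : finType) (W : V -> V -> R) (S : {set V}) : R :=
  \sum_(u in S) \sum_(v in S) W u v.

Definition Exp (R : realFieldType) (V : finType) (D : {set V} -> R) (f : {set V} -> R) : R :=
  \sum_(S : {set V}) D S * f S.

(* Type profiles: bijections from the agents [n] = 'I_#|V| to V (uniform). *)
Definition bijs (V : finType) : {set {ffun 'I_#|V| -> V}} :=
  [set t : {ffun 'I_#|V| -> V} | injectiveb t].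

(* An identity-independent signaling scheme is given by a finite probability
   space (Omega, P) and the random signal vector s : Omega -> V -> R;
   the signal space Sigma is a finite subset (seq) of [0,1]. *)
Definition is_scheme (R : realFieldType) (V Omega : finType) (Sigma : seq R)
    (P : Omega -> R) (s : Omega -> V -> R) : Prop :=
  (forall th, th \in Sigma -> 0 <= th <= 1) /\
  (forall w, 0 <= P w) /\ (\sum_w P w = 1) /\
  (forall w v, s w v \in Sigma).

(* Pr[ s_{t_i} = th ], over t uniform bijection and s independent of t. *)
Definition sig_prob (R : realFieldType) (V Omega : finType)
    (P : Omega -> R) (s : Omega -> V -> R) (i : 'I_#|V|) (th : R) : R :=
  \sum_(t in bijs V) \sum_(w : Omega)
     (#|bijs V|%:R)^-1 * P w * (s w (t i) == th)%:R.

(* Q_i(x | th) = E[ x + sum_{v' <> t_i} W_{t_i,v'} s_{v'} | s_{t_i} = th ]. *)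
Definition Qfun (R : realFieldType) (V Omega : finType) (W : V -> V -> R)
    (P : Omega -> R) (s : Omega -> V -> R) (i : 'I_#|V|) (x th : R) : R :=
  (\sum_(t in bijs V) \sum_(w : Omega)
     (#|bijs V|%:R)^-1 * P w * (s w (t i) == th)%:R *
       (x + \sum_(v | v != t i) W (t i) v * s w v))
  / sig_prob P s i th.

Definition persuasive (R : realFieldType) (V Omega : finType) (W : V -> V -> R)
    (Sigma : seq R) (P : Omega -> R) (s : Omega -> V -> R) : Prop :=
  forall (i : 'I_#|V|) (th : R), th \in Sigma -> 0 < sig_prob P s i th ->
    1 <= Qfun W P s i th th /\
    (0 <= th /\
     forall x, 0 <= x -> 1 <= Qfun W P s i x th -> th <= x).

Definition cost (R : realFieldType) (V Omega : finType)
    (P : Omega -> R) (s : Omega -> V -> R) : R :=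
  \sum_(w : Omega) P w * \sum_(v : V) `|s w v|.

From mathcomp Require Import all_boot all_order all_algebra perm.
From mathcomp Require Import ring lra.
Import Order.TTheory GRing.Theory Num.Theory.
Set Implicit Arguments. Unset Strict Implicit. Unset Printing Implicit Defensive.
Local Open Scope ring_scope.

(* Since the type profile is a uniform bijection, the type of agent i is
   uniform on V, so Q_i(x | th) = x + X/M, where M sums over v the probability
   that s_v = th and X sums the matching externalities.  For s = alpha 1_S the
   level set {s = 0} gives M = E|V \ S| and X = alpha E[Cut(S)], while {s = alpha}
   gives M = E|S| and X = alpha (E[Induced(S)] - E|S|).  The choice
   alpha = E|S| / E[Induced(S)] makes the second ratio exactly 1 - alpha, the
   cut hypothesis makes the first one at least 1, and Induced(S) >= |S| gives
   alpha <= 1. *)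

Definition bijs_fiber (V : finType) (i : 'I_#|V|) (u : V) : {set {ffun 'I_#|V| -> V}} :=
  [set t in bijs V | t i == u].

Lemma card_bijs_fiber (V : finType) (i : 'I_#|V|) (u u' : V) :
  #|bijs_fiber i u| = #|bijs_fiber i u'|.
Proof.
wlog suff le_fiber : u u' / (#|bijs_fiber i u| <= #|bijs_fiber i u'|)%N.
  by apply/eqP; rewrite eqn_leq !le_fiber.
pose f := fun t : {ffun 'I_#|V| -> V} => [ffun j => tperm u u' (t j)].
have fK : cancel f f by move=> t; apply/ffunP => j; rewrite !ffunE tpermK.
rewrite -(card_imset _ (can_inj fK)); apply: subset_leq_card.
apply/subsetP => ft /imsetP [t]; rewrite !inE => /andP [t_bij /eqP ti] ->.
rewrite ffunE ti tpermL eqxx andbT.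
by apply/injectiveP => j k; rewrite !ffunE => /perm_inj; apply: (injectiveP _ t_bij).
Qed.

Lemma sum_bijs (R : pzSemiRingType) (V : finType) (i : 'I_#|V|) (u0 : V) (F : V -> R) :
  \sum_(t in bijs V) F (t i) = #|bijs_fiber i u0|%:R * \sum_u F u.
Proof.
rewrite (partition_big (fun t : {ffun 'I_#|V| -> V} => t i) predT) //=.
rewrite mulr_natl -sumrMnl; apply: eq_bigr => u _.
rewrite (card_bijs_fiber i u0 u) -sumr_const /bijs_fiber; apply: eq_big => [t | t].
  by rewrite !inE.
by move=> /andP [_ /eqP ->].
Qed.

(* [sig_prob] and the numerator of [Qfun], with the uniform type [t i] summed
   out instead of averaged (see [sig_probE] and [QfunE]). *)
Definition sig_mass (R : realFieldType) (V Omega : finType)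
    (P : Omega -> R) (s : Omega -> V -> R) (th : R) : R :=
  \sum_u \sum_w P w * (s w u == th)%:R.

Definition sig_externality (R : realFieldType) (V Omega : finType) (W : V -> V -> R)
    (P : Omega -> R) (s : Omega -> V -> R) (th : R) : R :=
  \sum_u \sum_w P w * (s w u == th)%:R * \sum_(v | v != u) W u v * s w v.

Lemma sig_probE (R : realFieldType) (V Omega : finType) (P : Omega -> R)
    (s : Omega -> V -> R) (i : 'I_#|V|) (u0 : V) (th : R) :
  sig_prob P s i th =
    (#|bijs V|%:R)^-1 * #|bijs_fiber i u0|%:R * sig_mass P s th.
Proof.
rewrite /sig_prob (sum_bijs i u0
  (fun u => \sum_w (#|bijs V|%:R)^-1 * P w * (s w u == th)%:R)) mulr_sumr [RHS]mulr_sumr.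
apply: eq_bigr => u _; rewrite !mulr_sumr.
by apply: eq_bigr => w _; ring.
Qed.

Lemma QfunE (R : realFieldType) (V Omega : finType) (W : V -> V -> R)
    (P : Omega -> R) (s : Omega -> V -> R) (i : 'I_#|V|) (u0 : V) (x th : R) :
  sig_prob P s i th != 0 ->
  Qfun W P s i x th = x + sig_externality W P s th / sig_mass P s th.
Proof.
rewrite /Qfun (sig_probE _ _ _ u0) !mulf_eq0 !negb_or.
move=> /andP [/andP [k_neq0 c_neq0] m_neq0].
set k := (#|bijs V|%:R)^-1.
rewrite (sum_bijs i u0 (fun u => \sum_w k * P w * (s w u == th)%:R *
  (x + \sum_(v | v != u) W u v * s w v))).
have -> : \sum_u \sum_w k * P w * (s w u == th)%:R *
            (x + \sum_(v | v != u) W u v * s w v)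
          = k * (x * sig_mass P s th + sig_externality W P s th).
  rewrite /sig_mass /sig_externality mulr_sumr -big_split mulr_sumr.
  apply: eq_bigr => u _; rewrite mulr_sumr -big_split mulr_sumr.
  by apply: eq_bigr => w _ /=; ring.
by field; rewrite k_neq0 c_neq0 m_neq0.
Qed.

Lemma persuasive_of_sig_mass (R : realFieldType) (V Omega : finType)
    (W : V -> V -> R) (Sigma : seq R) (P : Omega -> R) (s : Omega -> V -> R) :
  (forall th, th \in Sigma -> 0 < sig_mass P s th ->
     let q := sig_externality W P s th / sig_mass P s th in
     [/\ 0 <= th, 1 <= th + q & th = 0 \/ th + q <= 1]) ->
  persuasive W Sigma P s.
Proof.
move=> sigma_ok i th th_in sp_gt0.
have /card_gt0P [u0 _] : (0 < #|V|)%N by apply: leq_ltn_trans (ltn_ord i).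
have m_gt0 : 0 < sig_mass P s th.
  rewrite ltNge; apply: contraTN sp_gt0 => m_le0.
  by rewrite -leNgt (sig_probE _ _ _ u0) mulr_ge0_le0 // mulr_ge0 ?invr_ge0.
have Q_eq x : Qfun W P s i x th = x + sig_externality W P s th / sig_mass P s th.
  by rewrite (QfunE W u0) // gt_eqF.
have [th_ge0 th_q_ge1 th_min] := sigma_ok th th_in m_gt0.
split; first by rewrite Q_eq.
split=> // x x_ge0; rewrite Q_eq => x_q_ge1.
by case: th_min => [-> // | ]; lra.
Qed.

Section SignalLevelSets.
Variables (R : realFieldType) (V Omega : finType).
Variables (P : Omega -> R) (s : Omega -> V -> R) (th : R) (A : Omega -> {set V}).
Hypothesis s_eq_th : forall w u, (s w u == th) = (u \in A w).

Lemma sig_mass_level_set : sig_mass P s th = \sum_w P w * #|A w|%:R.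
Proof.
rewrite /sig_mass exchange_big; apply: eq_bigr => w _.
rewrite -sum1_card natr_sum mulr_sumr [RHS]big_mkcond; apply: eq_bigr => u _.
by rewrite s_eq_th; case: (u \in A w); rewrite ?mulr1 ?mulr0.
Qed.

Lemma sig_externality_level_set (W : V -> V -> R) :
  sig_externality W P s th =
    \sum_w P w * \sum_(u in A w) \sum_(v | v != u) W u v * s w v.
Proof.
rewrite /sig_externality exchange_big; apply: eq_bigr => w _.
rewrite mulr_sumr [RHS]big_mkcond; apply: eq_bigr => u _.
by rewrite s_eq_th; case: (u \in A w); rewrite ?mulr1 ?mulr0 ?mul0r.
Qed.

End SignalLevelSets.

Definition indicator_scheme (R : realFieldType) (V : finType) (a : R)
    (S : {set V}) (v : V) : R :=
  a * (v \in S)%:R.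

Section IndicatorScheme.
Variables (R : realFieldType) (V : finType) (W : V -> V -> R) (D : {set V} -> R).
Variable a : R.
Hypothesis a_neq0 : a != 0.

Lemma indicator_scheme_eq0 (S : {set V}) (u : V) :
  (indicator_scheme a S u == 0) = (u \in ~: S).
Proof.
by rewrite /indicator_scheme inE; case: (u \in S); rewrite ?mulr1 ?mulr0 ?eqxx ?(negbTE a_neq0).
Qed.

Lemma indicator_scheme_eq (S : {set V}) (u : V) :
  (indicator_scheme a S u == a) = (u \in S).
Proof.
rewrite /indicator_scheme; case: (u \in S); rewrite ?mulr1 ?mulr0 ?eqxx //.
by rewrite eq_sym (negbTE a_neq0).
Qed.

Lemma sum_neq_indicator_scheme (S : {set V}) (u : V) :
  \sum_(v | v != u) W u v * indicator_scheme a S v =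
    a * (\sum_(v in S) W u v - W u u * (u \in S)%:R).
Proof.
have -> : \sum_(v in S) W u v = \sum_v W u v * (v \in S)%:R.
  by rewrite big_mkcond; apply: eq_bigr => v _; case: (v \in S); rewrite ?mulr1 ?mulr0.
rewrite [X in a * (X - _)](bigD1 u) //= addrC addrK mulr_sumr.
by apply: eq_bigr => v _; rewrite mulrCA.
Qed.

Lemma sig_mass_indicator_scheme0 :
  sig_mass D (indicator_scheme a) 0 = Exp D (fun S => #|~: S|%:R).
Proof. exact: sig_mass_level_set indicator_scheme_eq0. Qed.

Lemma sig_mass_indicator_scheme :
  sig_mass D (indicator_scheme a) a = Exp D (fun S => #|S|%:R).
Proof. exact: sig_mass_level_set indicator_scheme_eq. Qed.

Lemma sig_externality_indicator_scheme0 :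
  (forall u v, W u v = W v u) ->
  sig_externality W D (indicator_scheme a) 0 = a * Exp D (Cut W).
Proof.
move=> W_sym; rewrite (sig_externality_level_set _ indicator_scheme_eq0) [RHS]mulr_sumr.
apply: eq_bigr => S _; rewrite mulrCA /Cut exchange_big /= [in RHS]mulr_sumr; congr (_ * _).
apply: eq_bigr => u; rewrite inE sum_neq_indicator_scheme => /negbTE ->.
by rewrite mulr0 subr0; congr (_ * _); apply: eq_bigr => v _; rewrite W_sym.
Qed.

Lemma sig_externality_indicator_scheme :
  (forall v, W v v = 1) ->
  sig_externality W D (indicator_scheme a) a =
    a * (Exp D (Induced W) - Exp D (fun S => #|S|%:R)).
Proof.
move=> W_diag; rewrite (sig_externality_level_set _ indicator_scheme_eq).
rewrite /Exp -sumrB mulr_sumr; apply: eq_bigr => S _.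
rewrite (eq_bigr (fun u => a * (\sum_(v in S) W u v - 1))); last first.
  by move=> u u_in; rewrite sum_neq_indicator_scheme u_in W_diag mulr1.
by rewrite -mulr_sumr sumrB sumr_const /Induced; ring.
Qed.

Lemma cost_indicator_scheme :
  cost D (indicator_scheme a) = `|a| * Exp D (fun S => #|S|%:R).
Proof.
rewrite /cost /Exp mulr_sumr; apply: eq_bigr => S _.
rewrite mulrCA; congr (_ * _).
rewrite -sum1_card natr_sum mulr_sumr [RHS]big_mkcond; apply: eq_bigr => v _.
by rewrite normrM; case: (v \in S); rewrite ?normr1 ?normr0 ?mulr1 ?mulr0.
Qed.

Lemma indicator_scheme_mem (S : {set V}) (v : V) :
  indicator_scheme a S v \in [:: 0; a].
Proof.
by rewrite /indicator_scheme !inE; case: (v \in S); rewrite ?mulr1 ?mulr0 eqxx ?orbT.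
Qed.

End IndicatorScheme.

Lemma ler_Exp (R : realFieldType) (V : finType) (D f g : {set V} -> R) :
  (forall S, 0 <= D S) -> (forall S, f S <= g S) -> Exp D f <= Exp D g.
Proof. by move=> D_ge0 le_fg; apply: ler_sum => S _; rewrite ler_wpM2l. Qed.

Lemma Exp_dirac (R : realFieldType) (V : finType) (D f : {set V} -> R) (S0 : {set V}) :
  (forall S, 0 <= D S) -> \sum_S D S = 1 -> D S0 = 1 -> Exp D f = f S0.
Proof.
move=> D_ge0 D_sum1 D_S0.
rewrite /Exp (bigD1 S0) //= D_S0 mul1r big1 ?addr0 // => S S_neq.
have D_rest0 : \sum_(S | S != S0) D S = 0.
  by move: D_sum1; rewrite (bigD1 S0) //= D_S0; lra.
by rewrite (psumr_eq0P (fun S _ => D_ge0 S) D_rest0) ?mul0r.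
Qed.

Lemma card_le_Induced (R : realFieldType) (V : finType) (W : V -> V -> R) (S : {set V}) :
  (forall u v, 0 <= W u v) -> (forall v, W v v = 1) -> #|S|%:R <= Induced W S.
Proof.
move=> W_ge0 W_diag; rewrite /Induced -sum1_card natr_sum; apply: ler_sum => u u_in.
by rewrite (bigD1 u) //= W_diag lerDl sumr_ge0.
Qed.

Theorem lemma3p4 (R : realFieldType) (V : finType) (W : V -> V -> R)
    (D : {set V} -> R) :
  (forall u v, W u v = W v u) ->
  (forall u v, 0 <= W u v <= 1) ->
  (forall v, W v v = 1) ->
  (forall S, 0 <= D S) -> \sum_(S : {set V}) D S = 1 ->
  0 < Exp D (fun S => #|S|%:R) ->
  (D setT = 1 \/
   Exp D (Induced W) / Exp D (fun S => #|S|%:R)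
     <= Exp D (Cut W) / Exp D (fun S => #|~: S|%:R)) ->
  let alpha := Exp D (fun S => #|S|%:R) / Exp D (Induced W) in
  let s := fun (S : {set V}) (v : V) => alpha * (v \in S)%:R in
  is_scheme [:: 0; alpha] D s /\
  persuasive W [:: 0; alpha] D s /\
  cost D s = Exp D (fun S => #|S|%:R) ^+ 2 / Exp D (Induced W) /\
  Exp D (fun S => #|S|%:R) ^+ 2 / Exp D (Induced W) <= Exp D (fun S => #|S|%:R).
Proof.
move=> W_sym W01 W_diag D_ge0 D_sum1 ES_gt0 cut_ratio_ge alpha s.
rewrite (_ : s = indicator_scheme alpha) // /alpha.
set ES := Exp D _ in ES_gt0 cut_ratio_ge *; set EI := Exp D (Induced W) in cut_ratio_ge *.
have ES_le_EI : ES <= EI.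
  by apply: ler_Exp => // S; apply: card_le_Induced => // u v; case/andP: (W01 u v).
have EI_gt0 : 0 < EI := lt_le_trans ES_gt0 ES_le_EI.
have alpha_gt0 : 0 < ES / EI by rewrite divr_gt0.
have alpha_le1 : ES / EI <= 1 by rewrite ler_pdivrMr // mul1r.
have cost_eq : ES ^+ 2 / EI = ES / EI * ES by rewrite expr2 mulrAC.
split; [|split; [|split]].
- split.
    move=> th; rewrite !inE => /orP [] /eqP ->.
      by rewrite lexx ler01.
    by rewrite alpha_le1 ltW.
  by do 2!split=> //; apply: indicator_scheme_mem; rewrite gt_eqF.
- apply: persuasive_of_sig_mass => th; rewrite !inE => /orP [] /eqP ->.
  + rewrite sig_mass_indicator_scheme0 ?sig_externality_indicator_scheme0 ?gt_eqF // => EN_gt0.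
    split=> //; last by left.
    case: cut_ratio_ge => [D_setT | ratio_le].
      by move: EN_gt0; rewrite (Exp_dirac _ D_ge0 D_sum1 D_setT) setCT cards0 ltxx.
    rewrite add0r -mulrA; apply: le_trans (ler_wpM2l (ltW alpha_gt0) ratio_le).
    by rewrite mulrA divfK ?divff // gt_eqF.
  + rewrite sig_mass_indicator_scheme ?sig_externality_indicator_scheme ?gt_eqF // => _.
    have -> : ES / EI * (EI - ES) / ES = 1 - ES / EI by field; rewrite !gt_eqF.
    by split; [exact: ltW | lra | right; lra].
- by rewrite cost_indicator_scheme gtr0_norm.
- by rewrite cost_eq ler_piMl // ltW.
Qed.
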